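(* Let $\mathbf{z}_1,\ldots,\mathbf{z}_n\in\mathbb{R}^d$ satisfy $\|\mathbf{z}_i\|_2\le1$ for all $i\in[n]$ and $\mathbf{0}\in\mathrm{conv}(\mathbf{z}_1,\ldots,\mathbf{z}_n)$. Then $\big\|\frac1n\sum_{i=1}^n\mathbf{z}_i\big\|_2\le1-\frac1n$.
   Context: $\mathrm{conv}$ denotes the convex hull. *)

From mathcomp Require Import all_boot all_order all_algebra.
Set Implicit Arguments. Unset Strict Implicit. Unset Printing Implicit Defensive.
Import Order.TTheory GRing.Theory Num.Theory.
Local Open Scope ring_scope.

Definition norm2 {R : rcfType} {d : nat} (v : 'rV[R]_d) : R :=
  Num.sqrt (\sum_(j < d) v 0 j ^+ 2).

Definition in_conv {R : rcfType} {n d : nat} (z : 'I_n -> 'rV[R]_d) (x : 'rV[R]_d) : Prop :=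
  exists lam : 'I_n -> R,
    (forall i, 0 <= lam i) /\ \sum_(i < n) lam i = 1 /\ \sum_(i < n) lam i *: z i = x.

From mathcomp Require Import all_boot all_order all_algebra.
From mathcomp Require Import ring lra.

Set Implicit Arguments.
Unset Strict Implicit.
Unset Printing Implicit Defensive.
Import Order.TTheory GRing.Theory Num.Theory.
Local Open Scope ring_scope.

(* Let lam be convex weights with sum_i lam_i z_i = 0 and let L = max_i lam_i,
   so that L >= 1/n.  Subtracting the null combination sum_i lam_i z_i / (n L)
   from the average gives
     (1/n) sum_i z_i = sum_i (1/n - lam_i / (n L)) z_i,
   whose coefficients are nonnegative (because lam_i <= L) and sum to
   1 - 1/(n L) <= 1 - 1/n (because L <= 1).  The triangle inequality and
   ||z_i|| <= 1 conclude. *)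

Lemma cauchy_schwarz_sum (R : realDomainType) (d : nat) (a b : 'I_d -> R) :
  (\sum_j a j * b j) ^+ 2 <= (\sum_j a j ^+ 2) * (\sum_j b j ^+ 2).
Proof.
set A := \sum_j a j ^+ 2; set B := \sum_j b j ^+ 2; set S := \sum_j a j * b j.
have A_ge0 : 0 <= A by apply: sumr_ge0 => j _; exact: sqr_ge0.
have [A0 | A_neq0] := eqVneq A 0.
  have a0 j : a j = 0.
    apply/eqP; rewrite -sqrf_eq0; apply/eqP.
    exact: (psumr_eq0P (fun j _ => sqr_ge0 (a j)) A0).
  by rewrite /S big1 => [|j _]; rewrite ?a0 ?mul0r // expr0n /= A0 mul0r.
have expand : \sum_j (A * b j - S * a j) ^+ 2 = A * (A * B - S ^+ 2).
  have -> x y : \sum_j (x * b j - y * a j) ^+ 2 = x ^+ 2 * B - 2 * x * y * S + y ^+ 2 * A.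
    rewrite /A /B /S !mulr_sumr -sumrB -big_split /=.
    by apply: eq_bigr => j _; ring.
  ring.
have : 0 <= A * (A * B - S ^+ 2).
  by rewrite -expand; apply: sumr_ge0 => j _; exact: sqr_ge0.
by rewrite pmulr_rge0 ?subr_ge0 // lt_def A_neq0.
Qed.

Section Norm2.
Variables (R : rcfType) (d : nat).
Implicit Types (u v : 'rV[R]_d) (c : R).

Lemma norm2_0 : norm2 (0 : 'rV[R]_d) = 0.
Proof. by rewrite /norm2 big1 ?sqrtr0 // => j _; rewrite mxE expr0n. Qed.

Lemma norm2Z c v : norm2 (c *: v) = `|c| * norm2 v.
Proof.
rewrite /norm2 -sqrtr_sqr -sqrtrM ?sqr_ge0 // mulr_sumr.
by congr Num.sqrt; apply: eq_bigr => j _; rewrite mxE exprMn.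
Qed.

Lemma ler_norm2D u v : norm2 (u + v) <= norm2 u + norm2 v.
Proof.
have CS := cauchy_schwarz_sum (fun j => u 0 j) (fun j => v 0 j).
set A := \sum_j u 0 j ^+ 2 in CS; set B := \sum_j v 0 j ^+ 2 in CS.
set S := \sum_j u 0 j * v 0 j in CS.
have A_ge0 : 0 <= A by apply: sumr_ge0 => j _; exact: sqr_ge0.
have B_ge0 : 0 <= B by apply: sumr_ge0 => j _; exact: sqr_ge0.
have sumD : \sum_j (u + v) 0 j ^+ 2 = A + 2 * S + B.
  rewrite /A /S /B mulr_sumr -!big_split /=.
  by apply: eq_bigr => j _; rewrite mxE; ring.
have S_le : S <= Num.sqrt A * Num.sqrt B.
  rewrite -sqrtrM //; apply: le_trans (ler_wsqrtr CS).
  by rewrite sqrtr_sqr ler_norm.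
rewrite /norm2 sumD -[X in _ <= X]ger0_norm ?addr_ge0 ?sqrtr_ge0 //.
rewrite -sqrtr_sqr ler_sqrt ?sqr_ge0 // sqrrD !sqr_sqrtr // -/A -/B.
rewrite -mulr_natl; lra.
Qed.

Lemma ler_norm2_sum n (f : 'I_n -> 'rV[R]_d) :
  norm2 (\sum_i f i) <= \sum_i norm2 (f i).
Proof.
apply: (big_ind2 (fun u x => norm2 u <= x)) => [|u x v y ux vy|//].
  by rewrite norm2_0.
exact: le_trans (ler_norm2D u v) (lerD ux vy).
Qed.

Lemma ler_norm2_comb n (w : 'I_n -> R) (f : 'I_n -> 'rV[R]_d) :
  (forall i, 0 <= w i) -> (forall i, norm2 (f i) <= 1) ->
  norm2 (\sum_i w i *: f i) <= \sum_i w i.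
Proof.
move=> w_ge0 f_le1; apply: le_trans (ler_norm2_sum _) _.
apply: ler_sum => i _; rewrite norm2Z ger0_norm //.
by rewrite -[leRHS]mulr1 ler_wpM2l.
Qed.

End Norm2.

Section AverageOfBalancedPoints.
Variables (R : rcfType) (n d : nat) (z : 'I_n.+1 -> 'rV[R]_d).
Variables (lam : 'I_n.+1 -> R) (k : 'I_n.+1).
Hypothesis lam_ge0 : forall i, 0 <= lam i.
Hypothesis lam_sum1 : \sum_i lam i = 1.
Hypothesis lam_balanced : \sum_i lam i *: z i = 0.
Hypothesis lam_max : forall i, lam i <= lam k.

Let N : R := n.+1%:R.
Let L := lam k.

Lemma lam_max_le1 : L <= 1.
Proof. by rewrite -lam_sum1 (bigD1 k) //= lerDl sumr_ge0. Qed.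

Lemma lam_max_ge_mean : 1 <= N * L.
Proof.
have -> : N * L = \sum_(i < n.+1) L by rewrite sumr_const card_ord mulr_natl.
by rewrite -lam_sum1 ler_sum.
Qed.

Let N_gt0 : 0 < N. Proof. by rewrite ltr0n. Qed.
Let NL_gt0 : 0 < N * L. Proof. exact: lt_le_trans ltr01 lam_max_ge_mean. Qed.

Definition shifted_weight i := N^-1 - lam i / (N * L).

Lemma shifted_weight_ge0 i : 0 <= shifted_weight i.
Proof. by rewrite subr_ge0 ler_pdivrMr // mulKf ?gt_eqF. Qed.

Lemma sum_shifted_weight : \sum_i shifted_weight i = 1 - (N * L)^-1.
Proof.
rewrite sumrB sumr_const card_ord -mulr_natr mulVf ?gt_eqF //.
by rewrite -mulr_suml lam_sum1 mul1r.
Qed.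

Lemma average_shifted_comb :
  N^-1 *: \sum_i z i = \sum_i shifted_weight i *: z i.
Proof.
under [RHS]eq_bigr do rewrite scalerBl [_ / _]mulrC -scalerA.
by rewrite sumrB -!scaler_sumr lam_balanced !scaler0 subr0.
Qed.

Lemma norm2_average_balanced :
  (forall i, norm2 (z i) <= 1) -> norm2 (N^-1 *: \sum_i z i) <= 1 - N^-1.
Proof.
move=> z_le1; rewrite average_shifted_comb.
apply: le_trans (ler_norm2_comb shifted_weight_ge0 z_le1) _.
rewrite sum_shifted_weight lerD2l lerN2 lef_pV2 ?posrE //.
by rewrite -[leRHS]mulr1 ler_wpM2l ?(ltW N_gt0) ?lam_max_le1.
Qed.

End AverageOfBalancedPoints.

Theorem lemma3p10 (R : rcfType) (n d : nat) (z : 'I_n -> 'rV[R]_d)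
  (hnorm : forall i, norm2 (z i) <= 1)
  (hconv : in_conv z 0) :
  norm2 (n%:R^-1 *: \sum_(i < n) z i) <= 1 - n%:R^-1.
Proof.
case: hconv => lam [lam_ge0 [lam_sum1 lam_balanced]].
case: n => [|n] in z hnorm lam lam_ge0 lam_sum1 lam_balanced *.
  by move/eqP: lam_sum1; rewrite big_ord0 eq_sym oner_eq0.
have [k _ lam_max] := @arg_maxP _ R _ ord0 predT lam isT.
by apply: norm2_average_balanced lam_ge0 lam_sum1 lam_balanced _ hnorm => i; apply: lam_max.
Qed.
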